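(* Let $E$ be a real Banach space and $\mathcal{C}\subset E$ a regular Birkhoff cone with $\ell\in E'$, $\|\ell\|=1$, and $K<\infty$ such that $\frac1K\|u\|\le\langle\ell,u\rangle\le\|u\|$ for $u\in\mathcal{C}$, and let $\rho>0$ with $\mathcal{C}(\rho)=\{x\in\mathcal{C}:B(x,\rho\|x\|)\subset\mathcal{C}\}$. Let $L\in L(E)$ with $L(\mathcal{C})\subset\mathcal{C}$. Then for every $x\in\mathcal{C}(\rho)\setminus\{0\}$, \[\frac\rho K\|L\|\,\|x\|\le\langle\ell,Lx\rangle\le\|L\|\,\|x\|\quad\text{and}\quad\frac\rho K\|L\|\le\frac{\langle\ell,Lx\rangle}{\langle\ell,x\rangle}\le K\|L\|.\]
   Context: A Birkhoff cone is a closed convex set $\mathcal{C}\subset E$ with $\mathbb{R}_+\mathcal{C}=\mathcal{C}$ and $\mathcal{C}\cap(-\mathcal{C})=\{0\}$; regular means it has non-empty interior and the stated outer regularity functional exists. *)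

From HB Require Import structures.
From mathcomp Require Import all_boot all_order all_algebra.
From mathcomp Require Import all_classical all_reals all_analysis.
Set Implicit Arguments. Unset Strict Implicit. Unset Printing Implicit Defensive.
Import Order.TTheory GRing.Theory Num.Theory.
Import numFieldNormedType.Exports.
Local Open Scope classical_set_scope.
Local Open Scope ring_scope.

Definition opnorm (R : realType) (V W : normedModType R) (f : V -> W) : R :=
  sup [set `|f x| | x in [set x : V | `|x| <= 1]].

Definition birkhoff_cone (R : realType) (E : normedModType R) (C : set E) : Prop :=
  [/\ closed C,
      (forall x y (t : R), C x -> C y -> 0 <= t -> t <= 1 -> C (t *: x + (1 - t) *: y)),
      [set t *: x | t in [set t : R | 0 <= t] & x in C] = C &
      C `&` [set - x | x in C] = [set 0]].

Definition cone_rho (R : realType) (E : normedModType R) (C : set E) (rho : R) : set E :=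
  [set x | C x /\ ball x (rho * `|x|) `<=` C].

From HB Require Import structures.
From mathcomp Require Import all_boot all_order all_algebra.
From mathcomp Require Import all_classical all_reals all_analysis.
From mathcomp Require Import ring unstable.
Set Implicit Arguments. Unset Strict Implicit. Unset Printing Implicit Defensive.
Import Order.TTheory GRing.Theory Num.Theory.
Import numFieldNormedType.Exports.
Local Open Scope classical_set_scope.
Local Open Scope ring_scope.

(* If [x] lies in [C(rho)] and [|y| < rho |x|], then [x + y] and [x - y] lie in
   [C], hence so do [L x + L y] and [L x - L y].  Since [|u| <= K l u] on [C]
   and [l] is linear, [2 |L y| <= K (l (L x + L y) + l (L x - L y)) = 2 K l (L x)].
   So [L] maps the ball of radius [rho |x|] into the ball of radius [K l (L x)],
   i.e. [rho |x| ||L|| <= K l (L x)].  The other bounds follow from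
   [|x| / K <= l x <= |x|] and [|L x| <= ||L|| |x|]. *)

Lemma ler_lt1M (R : realFieldType) (a b : R) :
  0 <= b -> (forall s, 0 < s < 1 -> s * a <= b) -> a <= b.
Proof.
move=> b0 sab; apply/ler_ltP => w wa.
have [w0|w_gt0] := leP w 0; first exact: le_trans w0 b0.
have a_gt0 : 0 < a := lt_trans w_gt0 wa.
have -> : w = w / a * a by rewrite divfK ?gt_eqF.
by apply: sab; rewrite divr_gt0 //= ltr_pdivrMr // mul1r.
Qed.

Section OperatorNorm.
Variables (R : realType) (V W : normedModType R) (f : {linear V -> W}).

Let unit_image := [set `|f x| | x in [set x : V | `|x| <= 1]].

Lemma opnorm_le_of_ball (r M : R) : 0 < r ->
  (forall y, `|y| < r -> `|f y| <= M) -> opnorm f <= M / r.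
Proof.
move=> r_gt0 fM.
have M_ge0 : 0 <= M by have := fM 0; rewrite linear0 !normr0; apply.
apply: ge_sup; first by exists 0, 0; rewrite /= ?linear0 normr0.
move=> _ [z /= z1 <-]; rewrite ler_pdivlMr // mulrC.
apply: ler_lt1M => // s /andP[s_gt0 s_lt1].
have sr_ge0 : 0 <= s * r by rewrite ltW ?mulr_gt0.
have fsz := fM ((s * r) *: z).
rewrite linearZ /= !normrZ (gtr0_norm s_gt0) (gtr0_norm r_gt0) in fsz.
rewrite mulrA; apply: fsz; apply: le_lt_trans (ler_piMr sr_ge0 z1) _.
by rewrite gtr_pMl.
Qed.

Hypothesis f_cont : continuous f.

Lemma opnorm_has_ubound : has_ubound unit_image.
Proof.
have /(bounded_funP f) /(_ 1) [M fM] := proj2 (linear_bounded_continuous f) f_cont.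
by exists M => _ [z /= z1 <-]; apply: fM.
Qed.

Lemma opnorm_ge0 : 0 <= opnorm f.
Proof.
apply: ub_le_sup; first exact: opnorm_has_ubound.
by exists 0; rewrite /= ?linear0 normr0.
Qed.

Lemma normr_le_opnorm x : `|f x| <= opnorm f * `|x|.
Proof.
have [->|x0] := eqVneq x 0; first by rewrite linear0 !normr0 mulr0.
have nx_gt0 : 0 < `|x| by rewrite normr_gt0.
pose u := `|x|^-1 *: x.
have -> : f x = `|x| *: f u by rewrite linearZ scalerA divff ?gt_eqF // scale1r.
rewrite normrZ normr_id mulrC; apply: ler_wpM2r; first exact: ltW.
apply: ub_le_sup; first exact: opnorm_has_ubound.
exists u => //=.
by rewrite normrZ normfV normr_id mulVf ?gt_eqF.
Qed.

End OperatorNorm.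

Lemma cone_rhoD (R : realType) (E : normedModType R) (C : set E) rho x y :
  cone_rho C rho x -> `|y| < rho * `|x| -> C (x + y).
Proof.
by move=> [_ Bx] y_small; apply: Bx; rewrite -ball_normE /= opprD addNKr normrN.
Qed.

Section ConeNormComparison.
Variables (R : realType) (E : normedModType R) (C : set E).
Variables (l : {linear E -> R^o}) (K : R).
Hypothesis normr_le_l : forall u, C u -> `|u| <= K * l u.

Lemma normr_le_of_cone_midpoint a b : C (a + b) -> C (a - b) -> `|b| <= K * l a.
Proof.
move=> Cab Cba.
have b2 : `|b| * 2 <= `|a + b| + `|a - b|.
  have -> : `|b| * 2 = `|(a + b) - (a - b)|.
    by rewrite opprB addrC addrA subrK -mulr2n normrMn mulr2n; ring.
  exact: ler_normB.
rewrite -(ler_pM2r (_ : 0 < 2 :> R)) //; apply: le_trans b2 _.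
have -> : K * l a * 2 = K * l (a + b) + K * l (a - b).
  by rewrite !linearD !linearN /=; ring.
by apply: lerD; apply: normr_le_l.
Qed.

Variables (L : {linear E -> E}) (rho : R).
Hypothesis L_cone : forall u, C u -> C (L u).

Lemma cone_rho_normr_image_le x y :
  cone_rho C rho x -> `|y| < rho * `|x| -> `|L y| <= K * l (L x).
Proof.
move=> Cx y_small; apply: normr_le_of_cone_midpoint.
  by rewrite -linearD; apply/L_cone/(cone_rhoD Cx).
by rewrite -linearB; apply/L_cone/(cone_rhoD Cx); rewrite normrN.
Qed.

Lemma cone_rho_opnorm_le x : 0 < rho -> x != 0 -> cone_rho C rho x ->
  opnorm L <= K * l (L x) / (rho * `|x|).
Proof.
move=> rho_gt0 x0 Cx; apply: opnorm_le_of_ball => [|y].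
  by rewrite mulr_gt0 // normr_gt0.
exact: cone_rho_normr_image_le.
Qed.

End ConeNormComparison.

Theorem lemmaA9 (R : realType) (E : completeNormedModType R) (C : set E)
  (l : {linear E -> R^o}) (K rho : R) (L : {linear E -> E}) :
  birkhoff_cone C ->
  interior C !=set0 ->
  continuous l -> opnorm l = 1 ->
  0 < K ->
  (forall u, C u -> K^-1 * `|u| <= l u /\ l u <= `|u|) ->
  0 < rho ->
  continuous L ->
  (forall x, C x -> C (L x)) ->
  forall x, cone_rho C rho x -> x != 0 ->
    [/\ rho / K * opnorm L * `|x| <= l (L x),
        l (L x) <= opnorm L * `|x|,
        rho / K * opnorm L <= l (L x) / l x &
        l (L x) / l x <= K * opnorm L].
Proof.
move=> _ _ _ _ K_gt0 l_cmp rho_gt0 L_cont L_cone x Cx x0.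
have normr_le_l u : C u -> `|u| <= K * l u.
  by move=> /l_cmp[+ _]; rewrite ler_pdivrMl.
have nx_gt0 : 0 < `|x| by rewrite normr_gt0.
have [lx_ge lx_le] := l_cmp x Cx.1.
have lx_gt0 : 0 < l x by apply: lt_le_trans lx_ge; rewrite mulr_gt0 ?invr_gt0.
have opL_ge0 := opnorm_ge0 L_cont.
have lower : rho / K * opnorm L * `|x| <= l (L x).
  have := cone_rho_opnorm_le normr_le_l L_cone rho_gt0 x0 Cx.
  rewrite ler_pdivlMr ?mulr_gt0 // => opL_le.
  have -> : rho / K * opnorm L * `|x| = opnorm L * (rho * `|x|) / K by ring.
  by rewrite ler_pdivrMr // [_ * K]mulrC.
have upper : l (L x) <= opnorm L * `|x|.
  exact: le_trans (l_cmp _ (L_cone _ Cx.1)).2 (normr_le_opnorm L_cont x).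
split => //.
- rewrite ler_pdivlMr //; apply: le_trans lower; apply: ler_wpM2l => //.
  by rewrite mulr_ge0 // divr_ge0 // ltW.
- rewrite ler_pdivrMr //; apply: le_trans upper _.
  rewrite [K * _]mulrC -mulrA; apply: ler_wpM2l => //.
  exact: normr_le_l Cx.1.
Qed.
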